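(* Let $ABC$ be a triangle and let $(P, P')$ and $(Q, Q')$ be two pairs of isogonal conjugates with respect to $ABC$. Then the center of the spiral similarity taking segment $PQ$ to segment $Q'P'$ (i.e. sending $P \mapsto Q'$ and $Q \mapsto P'$) lies on the circumcircle $(ABC)$.
   Context: A spiral similarity is a composition of a rotation and a homothety with a common center; its center is the ''spiral center''. *)

(* the Euclidean plane is modelled as the complex numbers R[i]
   over an arbitrary real closed field R (e.g. the reals). *)
From HB Require Import structures.
From mathcomp Require Import all_boot all_order all_algebra.
From mathcomp Require Import complex.
Set Implicit Arguments. Unset Strict Implicit. Unset Printing Implicit Defensive.
Import Order.TTheory GRing.Theory Num.Theory.
Local Open Scope ring_scope.
Local Open Scope complex_scope.

Definition collinear (R : rcfType) (X Y Z : R[i]) : Prop :=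
  ((Y - X) * (Z - X)^*) \is Num.real.

(* Isogonality of lines VX and VY w.r.t. the angle (V; U, W): the directed angle
   from VU to VX equals the directed angle from VY to VW (mod pi), i.e.
   arg(X-V) - arg(U-V) = arg(W-V) - arg(Y-V) mod pi, i.e.
   (X - V) * (Y - V) / ((U - V) * (W - V)) is real. *)
Definition isogonal_at (R : rcfType) (V U W X Y : R[i]) : Prop :=
  ((X - V) * (Y - V) / ((U - V) * (W - V))) \is Num.real.

Definition isogonal_conjugates (R : rcfType) (A B C P P' : R[i]) : Prop :=
  [/\ [/\ ~ collinear A B P, ~ collinear B C P & ~ collinear C A P],
      [/\ ~ collinear A B P', ~ collinear B C P' & ~ collinear C A P'] &
      [/\ isogonal_at A B C P P', isogonal_at B C A P P' & isogonal_at C A B P P']].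

Definition on_circumcircle (R : rcfType) (A B C X : R[i]) : Prop :=
  exists c : R[i], [/\ `|A - c| = `|B - c|, `|A - c| = `|C - c| & `|A - c| = `|X - c|].

Definition spiral (R : rcfType) (O a : R[i]) (z : R[i]) : R[i] := O + a * (z - O).

(* For P' and Q' the images of Q and P under z |-> O + a (z - O), every point V
   satisfies (P - V)(P' - V) - (Q - V)(Q' - V) = (O - V)(P - Q)(1 - a).
   Isogonality at a vertex V makes both products on the left real multiples of
   the product of the two sides at V, hence so is (O - V) times the fixed
   nonzero factor (P - Q)(1 - a).  Comparing V = A with V = B, the cross ratio
   (O - A)(C - B) / ((O - B)(C - A)) is real, so O is concyclic with A, B, C. *)
From HB Require Import structures.
From mathcomp Require Import all_boot all_order all_algebra.
From mathcomp Require Import complex.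
From mathcomp Require Import ring.
Set Implicit Arguments.
Unset Strict Implicit.
Unset Printing Implicit Defensive.
Import Order.TTheory GRing.Theory Num.Theory.
Local Open Scope ring_scope.

Section Parallel.
Variable K : numClosedFieldType.
Implicit Types x y z u w l : K.

Definition parallel x y := x * y^* \is Num.real.

Lemma parallel_refl x : parallel x x.
Proof. exact/ger0_real/mul_conjC_ge0. Qed.

Lemma parallel_sym x y : parallel x y = parallel y x.
Proof. by rewrite /parallel -CrealJ rmorphM /= conjCK mulrC. Qed.

Lemma parallel0l x : parallel 0 x.
Proof. by rewrite /parallel mul0r real0. Qed.

Lemma parallel0r x : parallel x 0.
Proof. by rewrite parallel_sym parallel0l. Qed.

Lemma parallelNl x y : parallel (- x) y = parallel x y.
Proof. by rewrite /parallel mulNr realN. Qed.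

Lemma parallelM x y u w :
  parallel x y -> parallel u w -> parallel (x * u) (y * w).
Proof. by rewrite /parallel rmorphM /= mulrACA; apply: rpredM. Qed.

Lemma parallel_mul2r l x y : l != 0 -> parallel (x * l) (y * l) = parallel x y.
Proof.
move=> l0; rewrite /parallel rmorphM /= mulrACA mulrC realMr ?mul_conjC_eq0 //.
exact: parallel_refl.
Qed.

Lemma parallel_trans y x z :
  y != 0 -> parallel x y -> parallel y z -> parallel x z.
Proof.
move=> y0 xy yz; rewrite /parallel -(realMr _ _ (parallel_refl y)) ?mul_conjC_eq0 //.
have -> : y * y^* * (x * z^*) = (x * y^*) * (y * z^*) by ring.
exact: rpredM.
Qed.

Lemma parallel_divr x u : u != 0 -> (x / u \is Num.real) = parallel x u.
Proof.
move=> u0; rewrite /parallel; have -> : x * u^* = u * u^* * (x / u) by field.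
by rewrite (realMr (x / u)) ?mul_conjC_eq0 //; apply: parallel_refl.
Qed.

Lemma noncollinear_neq (A B C : K) :
  ~~ parallel (B - A) (C - A) -> [/\ A != B, B != C & C != A].
Proof.
move=> nABC; split; apply: contraNneq nABC => ->.
- by rewrite subrr parallel0l.
- exact: parallel_refl.
- by rewrite subrr parallel0r.
Qed.

Lemma parallel_cross_ratio (A B C O l : K) :
  A != B -> B != C -> C != A -> l != 0 ->
  parallel ((O - A) * l) ((B - A) * (C - A)) ->
  parallel ((O - B) * l) ((C - B) * (A - B)) ->
  parallel ((O - A) * (C - B)) ((O - B) * (C - A)).
Proof.
move=> AB BC CA l0 hA hB; rewrite -(parallel_mul2r _ _ l0).
have hA' := parallelM hA (parallel_refl (C - B)).
have hB' := parallelM hB (parallel_refl (C - A)).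
have sidesN : (B - A) * (C - A) * (C - B) = - ((C - B) * (A - B) * (C - A)) by ring.
have sides0 : (C - B) * (A - B) * (C - A) != 0.
  by rewrite !mulf_neq0 // subr_eq0 // eq_sym.
apply: (parallel_trans sides0); last by rewrite parallel_sym mulrAC.
apply: (parallel_trans (y := (B - A) * (C - A) * (C - B))).
- by rewrite sidesN oppr_eq0.
- by rewrite mulrAC.
- by rewrite sidesN parallelNl parallel_refl.
Qed.

End Parallel.

Section Circumcenter.
Variable K : numClosedFieldType.
Implicit Types A B C X : K.

Definition cdet A B C := A^* * (B - C) + B^* * (C - A) + C^* * (A - B).

(* The point c with |A - c| = |B - c| = |C - c|, obtained by solving these two
   equations, which are linear in c and its conjugate. *)
Definition circumcenter A B C :=
  (A * A^* * (B - C) + B * B^* * (C - A) + C * C^* * (A - B)) / cdet A B C.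

Lemma cdetE A B C :
  cdet A B C = ((B - A) * (C - A)^*)^* - (B - A) * (C - A)^*.
Proof. by rewrite /cdet !(rmorphB, rmorphM) /= !conjCK; ring. Qed.

Lemma cdet_eq0 A B C : (cdet A B C == 0) = parallel (B - A) (C - A).
Proof. by rewrite cdetE subr_eq0 /parallel CrealE. Qed.

Lemma cdetJ A B C : (cdet A B C)^* = - cdet A B C.
Proof. by rewrite cdetE rmorphB /= conjCK opprB. Qed.

Lemma sqr_norm_sub_circumcenter A B C X : cdet A B C != 0 ->
  (`|X - circumcenter A B C| ^+ 2 - `|A - circumcenter A B C| ^+ 2) * cdet A B C
  = (X - A) * (C - B) * ((X - B) * (C - A))^*
    - ((X - A) * (C - B) * ((X - B) * (C - A))^*)^*.
Proof.
move=> D0; rewrite !normCK /circumcenter !(rmorphB, rmorphM, fmorphV) /= cdetJ.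
move: D0; rewrite /cdet !(rmorphB, rmorphM, rmorphD) /= !conjCK => D0.
by field.
Qed.

Lemma circumcenter_norm_eq A B C X : cdet A B C != 0 ->
  parallel ((X - A) * (C - B)) ((X - B) * (C - A)) ->
  `|X - circumcenter A B C| = `|A - circumcenter A B C|.
Proof.
move=> D0; rewrite /parallel CrealE => /eqP crossJ.
have := sqr_norm_sub_circumcenter X D0; rewrite crossJ subrr => /eqP.
rewrite mulf_eq0 (negbTE D0) orbF subr_eq0 eqrXn2 ?normr_ge0 //.
by move/eqP.
Qed.

End Circumcenter.

Lemma parallel_on_circumcircle (R : rcfType) (A B C O : R[i]) :
  ~ collinear A B C -> parallel ((O - A) * (C - B)) ((O - B) * (C - A)) ->
  on_circumcircle A B C O.
Proof.
move=> /negP nABC hO; have D0 : cdet A B C != 0 by rewrite cdet_eq0.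
exists (circumcenter A B C); split; apply/esym/circumcenter_norm_eq => //.
- by rewrite subrr mul0r parallel0r.
- by rewrite mulrC parallel_refl.
Qed.

Lemma spiral_cross_diff (R : rcfType) (O a P Q V : R[i]) :
  (P - V) * (spiral O a Q - V) - (Q - V) * (spiral O a P - V)
  = (O - V) * ((P - Q) * (1 - a)).
Proof. by rewrite /spiral; ring. Qed.

Lemma isogonal_at_spiral (R : rcfType) (V U W P Q O a : R[i]) :
  U != V -> W != V ->
  isogonal_at V U W P (spiral O a Q) -> isogonal_at V U W Q (spiral O a P) ->
  parallel ((O - V) * ((P - Q) * (1 - a))) ((U - V) * (W - V)).
Proof.
move=> UV WV hP hQ; rewrite -parallel_divr ?mulf_neq0 ?subr_eq0 //.
by rewrite -spiral_cross_diff mulrBl rpredB.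
Qed.

Theorem lemma2p3 (R : rcfType) (A B C P P' Q Q' O a : R[i]) :
  ~ collinear A B C ->
  isogonal_conjugates A B C P P' ->
  isogonal_conjugates A B C Q Q' ->
  P != Q ->
  a != 0 -> a != 1 ->
  spiral O a P = Q' -> spiral O a Q = P' ->
  on_circumcircle A B C O.
Proof.
move=> nABC [_ _ [iPA iPB _]] [_ _ [iQA iQB _]] PQ _ a1 HQ' HP'; subst P' Q'.
have [AB BC CA] : [/\ A != B, B != C & C != A] by apply/noncollinear_neq/negP.
have l0 : (P - Q) * (1 - a) != 0 by rewrite mulf_neq0 // subr_eq0 // eq_sym.
apply: parallel_on_circumcircle nABC _.
have BA : B != A by rewrite eq_sym.
have CB : C != B by rewrite eq_sym.
apply: (parallel_cross_ratio AB BC CA l0).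
- exact: isogonal_at_spiral BA CA iPA iQA.
- exact: isogonal_at_spiral CB AB iPB iQB.
Qed.
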